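(* There exists an infinite maximal triangle-free graph which satisfies property $\mathscr{D}_k$ for every $k\ge1$ but which is not a blow-up of any finite graph.
   Context: A (possibly infinite) graph is maximal triangle-free if it contains no triangle but adding any new edge between non-adjacent vertices creates a triangle. Property $\mathscr{D}_k$: for every $m\in\{1,\dots,k\}$ and every sequence $x_1,\dots,x_{3m}$ of (not necessarily distinct) vertices there is a vertex $y$ with $|\{i\in[3m]: x_iy\in E(G)\}|\ge m+1$. A blow-up of $H$ is any graph obtained by replacing each vertex of $H$ by a non-empty independent set (possibly infinite) and each edge of $H$ by the complete bipartite graph between the corresponding sets, with no further edges. *)

From Stdlib Require Import Arith List.
Import ListNotations.

Record graph := Graph {
  vert : Type;
  adj : vert -> vert -> Prop;
  adj_sym : forall x y, adj x y -> adj y x;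
  adj_irrefl : forall x, ~ adj x x
}.

Definition infinite_graph (G : graph) : Prop :=
  forall l : list (vert G), exists v, ~ In v l.

Definition triangle_free (G : graph) : Prop :=
  ~ exists x y z : vert G, adj G x y /\ adj G y z /\ adj G x z.

(* Maximal triangle-free: triangle-free, and adding any new edge xy between
   distinct non-adjacent vertices creates a triangle, i.e. x and y have a
   common neighbour. *)
Definition maximal_triangle_free (G : graph) : Prop :=
  triangle_free G /\
  forall x y : vert G, x <> y -> ~ adj G x y ->
    exists z, adj G x z /\ adj G z y.

Definition at_least_indices (n c : nat) (P : nat -> Prop) : Prop :=
  exists S : list nat, NoDup S /\
    (forall i, In i S -> i < n /\ P i) /\ c <= length S.

(* Property D_k: for every m in {1,..,k} and every sequence x_1..x_{3m}
   (indexed here by 0..3m-1, entries beyond are irrelevant) there is a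
   vertex y adjacent to at least m+1 of the x_i (counted with index). *)
Definition property_D (k : nat) (G : graph) : Prop :=
  forall m : nat, 1 <= m -> m <= k ->
  forall x : nat -> vert G,
    exists y : vert G, at_least_indices (3 * m) (m + 1) (fun i => adj G (x i) y).

Record fin_graph := FinGraph {
  fg_n : nat;
  fg_adj : nat -> nat -> Prop;
  fg_sym : forall a b, a < fg_n -> b < fg_n -> fg_adj a b -> fg_adj b a;
  fg_irrefl : forall a, a < fg_n -> ~ fg_adj a a
}.

(* G is a blow-up of H: the vertex set of G is partitioned into non-empty
   classes f^{-1}(a), a a vertex of H (f surjective), each class is
   independent and two vertices are adjacent iff their classes are adjacent
   in H (complete bipartite between classes of an edge, no further edges). *)
Definition is_blowup_of (G : graph) (H : fin_graph) : Prop :=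
  exists f : vert G -> nat,
    (forall v, f v < fg_n H) /\
    (forall a, a < fg_n H -> exists v, f v = a) /\
    (forall u v, adj G u v <-> fg_adj H (f u) (f v)).

Definition is_blowup_of_finite_graph (G : graph) : Prop :=
  exists H : fin_graph, is_blowup_of G H.

(* The graph is the circle R/Z restricted to the dyadic points of [0,1), two points being
   adjacent when their circular distance exceeds 1/3.  Since 3 does not divide a power of 2,
   no two dyadic points are exactly 1/3 apart.  Three arcs of length in (1/3, 2/3) cannot close
   up, so there is no triangle.  For a non-adjacent pair x, y the counterclockwise distance f
   from x to y is < 1/3 or > 2/3, and the point at counterclockwise distance f/2 + 1/2,
   resp. f/2, from x is a common neighbour.
   For D_k: if some half-open arc [x_j, x_j + 1/3) contained at most m of the 3m points for
   every j, then so would every arc (t, t + 1/3]; the three arcs of this form starting at x_0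
   cover the circle, and the first one misses x_0, which gives fewer than 3m points.  Hence some
   [x_j, x_j + 1/3) contains m + 1 points, and a dyadic point roughly opposite to them is
   adjacent to all of them.
   Vertices in the same class of a blow-up have the same neighbourhood, but any two points
   u < v of [0, 1/4] are separated by a dyadic point slightly beyond u + 1/3; so a blow-up of
   a finite graph would have infinitely many classes. *)

From Stdlib Require Import List Lia Reals Lra ZArith Znumtheory FinFun.
From Stdlib Require Import Classical ClassicalEpsilon ProofIrrelevance.
Import ListNotations.
Local Open Scope nat_scope.

Fixpoint count (P : nat -> Prop) (n : nat) : nat :=
  match n with
  | 0 => 0
  | S n' => count P n' + if excluded_middle_informative (P n') then 1 else 0
  end.

Lemma count_le_mono (P Q : nat -> Prop) n :
  (forall i, i < n -> P i -> Q i) -> count P n <= count Q n.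
Proof.
  induction n as [|n IH]; intros HPQ; simpl; [lia|].
  specialize (IH (fun i Hi => HPQ i ltac:(lia))).
  destruct (excluded_middle_informative (P n)) as [HP|];
  destruct (excluded_middle_informative (Q n)) as [|HQ]; try lia.
  exfalso; exact (HQ (HPQ n ltac:(lia) HP)).
Qed.

Lemma count_lt_mono (P Q : nat -> Prop) n j :
  j < n -> ~ P j -> Q j -> (forall i, i < n -> P i -> Q i) -> count P n < count Q n.
Proof.
  induction n as [|n IH]; intros Hj HPj HQj HPQ; simpl; [lia|].
  destruct (Nat.eq_dec j n) as [->|Hjn].
  - pose proof (count_le_mono P Q n (fun i Hi => HPQ i ltac:(lia))).
    destruct (excluded_middle_informative (P n)); [contradiction|].
    destruct (excluded_middle_informative (Q n)); [lia|contradiction].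
  - specialize (IH ltac:(lia) HPj HQj (fun i Hi => HPQ i ltac:(lia))).
    destruct (excluded_middle_informative (P n)) as [HP|];
    destruct (excluded_middle_informative (Q n)) as [|HQ]; try lia.
    exfalso; exact (HQ (HPQ n ltac:(lia) HP)).
Qed.

Lemma count_none (P : nat -> Prop) n : (forall i, i < n -> ~ P i) -> count P n = 0.
Proof.
  induction n as [|n IH]; intros HP; simpl; [reflexivity|].
  rewrite IH by (intros i Hi; apply HP; lia).
  destruct (excluded_middle_informative (P n)) as [Hn|]; [|reflexivity].
  exfalso; exact (HP n ltac:(lia) Hn).
Qed.

Lemma count_cover3 (P Q R : nat -> Prop) n :
  (forall i, i < n -> P i \/ Q i \/ R i) -> n <= count P n + count Q n + count R n.
Proof.
  induction n as [|n IH]; intros Hcov; simpl; [lia|].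
  specialize (IH (fun i Hi => Hcov i ltac:(lia))).
  destruct (excluded_middle_informative (P n));
  destruct (excluded_middle_informative (Q n));
  destruct (excluded_middle_informative (R n)); try lia.
  destruct (Hcov n ltac:(lia)) as [|[|]]; contradiction.
Qed.

Lemma count_witnesses (P : nat -> Prop) n :
  exists S, NoDup S /\ (forall i, In i S -> i < n /\ P i) /\ length S = count P n.
Proof.
  induction n as [|n [S [HS [HinS Hlen]]]]; simpl.
  - exists []. split; [constructor | split; [intros i [] | reflexivity]].
  - destruct (excluded_middle_informative (P n)) as [Hn|Hn].
    + exists (n :: S). split; [|split].
      * constructor; [intros Hin; specialize (HinS n Hin); lia | exact HS].
      * intros i [<-|Hi]; [split; [lia | exact Hn] | specialize (HinS i Hi); split; [lia | tauto]].
      * simpl; lia.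
    + exists S. split; [exact HS | split; [|lia]].
      intros i Hi; specialize (HinS i Hi); split; [lia | tauto].
Qed.

Lemma at_least_indices_count (P : nat -> Prop) n c :
  c <= count P n -> at_least_indices n c P.
Proof.
  intros Hc. destruct (count_witnesses P n) as [S [HS [HinS Hlen]]].
  exists S. split; [exact HS | split; [exact HinS | lia]].
Qed.

Lemma injective_family_not_listed {T : Type} (e : nat -> T) :
  Injective e -> forall l : list T, exists k, ~ In (e k) l.
Proof.
  intros He l. apply not_all_not_ex. intros Hall.
  assert (Hincl : incl (map e (seq 0 (S (length l)))) l).
  { intros t Ht. apply in_map_iff in Ht as [k [<- _]]. exact (NNPP _ (Hall k)). }
  pose proof (NoDup_incl_length (Injective_map_NoDup He (seq_NoDup _ 0)) Hincl) as Hlen.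
  rewrite length_map, length_seq in Hlen. lia.
Qed.

Local Open Scope R_scope.

Lemma exists_argmin (n : nat) (P : nat -> Prop) (h : nat -> R) :
  (exists i, (i < n)%nat /\ P i) ->
  exists i0, (i0 < n)%nat /\ P i0 /\ forall i, (i < n)%nat -> P i -> h i0 <= h i.
Proof.
  induction n as [|n IH]; intros [i [Hi Pi]]; [lia|].
  destruct (classic (exists i, (i < n)%nat /\ P i)) as [Hex|Hno].
  - destruct (IH Hex) as [i0 [Hi0 [Pi0 Hmin]]].
    destruct (classic (P n /\ h n < h i0)) as [[Pn Hlt]|Hnot].
    + exists n. split; [lia | split; [exact Pn|]]. intros j Hj Pj.
      destruct (Nat.eq_dec j n) as [->|Hjn]; [lra|]. specialize (Hmin j ltac:(lia) Pj). lra.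
    + exists i0. split; [lia | split; [exact Pi0|]]. intros j Hj Pj.
      destruct (Nat.eq_dec j n) as [->|Hjn]; [|apply Hmin; [lia | exact Pj]].
      apply Rnot_lt_le. intros Hlt. exact (Hnot (conj Pj Hlt)).
  - assert (Honly : forall j, (j < S n)%nat -> P j -> j = n).
    { intros j Hj Pj. destruct (Nat.eq_dec j n) as [|Hjn]; [assumption|].
      exfalso. apply Hno. exists j. split; [lia | exact Pj]. }
    rewrite (Honly i Hi Pi) in Pi. exists n.
    split; [lia | split; [exact Pi|]]. intros j Hj Pj. rewrite (Honly j Hj Pj). lra.
Qed.

Definition dyadic (x : R) : Prop := exists (a : Z) (k : nat), x = IZR a / 2 ^ k.

Lemma dyadic_IZR z : dyadic (IZR z).
Proof. exists z, 0%nat. simpl. field. Qed.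

Lemma dyadic_add x y : dyadic x -> dyadic y -> dyadic (x + y).
Proof.
  intros [a [k ->]] [b [l ->]].
  exists (a * 2 ^ Z.of_nat l + b * 2 ^ Z.of_nat k)%Z, (k + l)%nat.
  rewrite plus_IZR, !mult_IZR, <- !pow_IZR, pow_add.
  field; split; apply pow_nonzero; lra.
Qed.

Lemma dyadic_opp x : dyadic x -> dyadic (- x).
Proof.
  intros [a [k ->]]. exists (- a)%Z, k. rewrite opp_IZR. field. apply pow_nonzero; lra.
Qed.

Lemma dyadic_sub x y : dyadic x -> dyadic y -> dyadic (x - y).
Proof. intros Hx Hy. apply dyadic_add; [exact Hx | exact (dyadic_opp y Hy)]. Qed.

Lemma dyadic_half x : dyadic x -> dyadic (x / 2).
Proof. intros [a [k ->]]. exists a, (S k). simpl. field. apply pow_nonzero; lra. Qed.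

Lemma dyadic_frac_part x : dyadic x -> dyadic (frac_part x).
Proof. intros Hx. apply dyadic_sub; [exact Hx | apply dyadic_IZR]. Qed.

Lemma three_not_divide_pow2 k : ~ (3 | 2 ^ Z.of_nat k)%Z.
Proof.
  induction k as [|k IH]; intros Hdiv.
  - apply Z.divide_1_r_nonneg in Hdiv; lia.
  - rewrite Nat2Z.inj_succ, Z.pow_succ_r in Hdiv by lia.
    apply IH, (Gauss _ 2); [exact Hdiv | apply Zgcd_1_rel_prime; reflexivity].
Qed.

Lemma dyadic_not_third x z : dyadic x -> x <> IZR z + 1 / 3.
Proof.
  intros [a [k ->]] Hx. apply (three_not_divide_pow2 k).
  exists (a - z * 2 ^ Z.of_nat k)%Z. apply eq_IZR.
  rewrite mult_IZR, minus_IZR, mult_IZR, <- pow_IZR.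
  assert (Hk : 2 ^ k <> 0) by (apply pow_nonzero; lra).
  apply (f_equal (fun r => r * 2 ^ k)) in Hx.
  replace (IZR a / 2 ^ k * 2 ^ k) with (IZR a) in Hx by (field; exact Hk).
  rewrite Hx. field.
Qed.

Lemma dyadic_dense a b : a < b -> exists d, dyadic d /\ a < d < b.
Proof.
  intros Hab.
  destruct (Pow_x_infinity 2 ltac:(rewrite Rabs_pos_eq; lra) (2 / (b - a))) as [N HN].
  specialize (HN N (le_n N)). rewrite Rabs_pos_eq in HN by (apply pow_le; lra).
  assert (HpN : 0 < 2 ^ N) by (apply pow_lt; lra).
  assert (Hgap : 1 < (b - a) * 2 ^ N).
  { apply Rge_le in HN. apply (Rmult_le_compat_l (b - a)) in HN; [|lra].
    replace ((b - a) * (2 / (b - a))) with 2 in HN by (field; lra). lra. }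
  destruct (archimed (a * 2 ^ N)) as [Hup1 Hup2].
  exists (IZR (up (a * 2 ^ N)) / 2 ^ N). split; [exists (up (a * 2 ^ N)), N; reflexivity|].
  split; [apply Rmult_lt_reg_r with (2 ^ N) | apply Rmult_lt_reg_r with (2 ^ N)];
    try exact HpN; unfold Rdiv; rewrite Rmult_assoc, Rinv_l by lra; lra.
Qed.

Lemma frac_part_bounds r : 0 <= frac_part r < 1.
Proof. destruct (base_fp r); lra. Qed.

Lemma frac_part_id r k : 0 <= r < 1 -> frac_part (r + IZR k) = r.
Proof.
  intros Hr. symmetry. apply (proj2 (Int_part_frac_part_spec (r + IZR k) k r Hr ltac:(ring))).
Qed.

(* Counterclockwise distance from a to b on R/Z. *)
Definition ccw (a b : R) : R := frac_part (b - a).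

Lemma ccw_bounds a b : 0 <= ccw a b < 1.
Proof. apply frac_part_bounds. Qed.

Lemma ccw_decomp a b : b - a = ccw a b + IZR (Int_part (b - a)).
Proof. unfold ccw. rewrite (Rplus_Int_part_frac_part (b - a)) at 1. ring. Qed.

Lemma ccw_eq a b r k : 0 <= r < 1 -> b - a = r + IZR k -> ccw a b = r.
Proof. intros Hr Hba. unfold ccw. rewrite Hba. exact (frac_part_id r k Hr). Qed.

Lemma ccw_self a : ccw a a = 0.
Proof. apply (ccw_eq a a 0 0); [lra | simpl; ring]. Qed.

Lemma ccw_sym a b : ccw a b <> 0 -> ccw b a = 1 - ccw a b.
Proof.
  intros Hab. pose proof (ccw_bounds a b). pose proof (ccw_decomp a b).
  apply ccw_eq with (k := (- Int_part (b - a) - 1)%Z); [lra|].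
  rewrite minus_IZR, opp_IZR. lra.
Qed.

Lemma ccw_split a b c : ccw a b <= ccw a c -> ccw b c = ccw a c - ccw a b.
Proof.
  intros Hle. pose proof (ccw_bounds a b). pose proof (ccw_bounds a c).
  pose proof (ccw_decomp a b). pose proof (ccw_decomp a c).
  apply ccw_eq with (k := (Int_part (c - a) - Int_part (b - a))%Z); [lra|].
  rewrite minus_IZR. lra.
Qed.

Lemma ccw_frac_part_r a b : ccw a (frac_part b) = ccw a b.
Proof.
  pose proof (ccw_bounds a b). pose proof (ccw_decomp a b).
  pose proof (Rplus_Int_part_frac_part b).
  apply ccw_eq with (k := (Int_part (b - a) - Int_part b)%Z); [lra|].
  rewrite minus_IZR. lra.
Qed.

Lemma ccw_eq_0 a b : 0 <= a < 1 -> 0 <= b < 1 -> ccw a b = 0 -> a = b.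
Proof.
  intros Ha Hb H0. pose proof (ccw_decomp a b) as Hd. rewrite H0, Rplus_0_l in Hd.
  assert (Hk : (Int_part (b - a) = 0)%Z).
  { assert (Hlo : IZR (-1) < IZR (Int_part (b - a))) by lra.
    assert (Hhi : IZR (Int_part (b - a)) < IZR 1) by lra.
    apply lt_IZR in Hlo, Hhi. lia. }
  rewrite Hk in Hd. simpl in Hd. lra.
Qed.

Lemma dyadic_ccw_ne_third a b :
  dyadic a -> dyadic b -> ccw a b <> 1 / 3 /\ ccw a b <> 2 / 3.
Proof.
  intros Ha Hb. pose proof (ccw_decomp a b) as Hd. split; intros Hc.
  - apply (dyadic_not_third (b - a) (Int_part (b - a))); [exact (dyadic_sub b a Hb Ha) | lra].
  - apply (dyadic_not_third (a - b) (- Int_part (b - a) - 1)); [exact (dyadic_sub a b Ha Hb)|].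
    rewrite minus_IZR, opp_IZR. lra.
Qed.

Lemma ccw_cover a b :
  0 < ccw a b <= 1 / 3 \/ 0 < ccw (a + 1 / 3) b <= 1 / 3 \/ 0 < ccw (a + 2 / 3) b <= 1 / 3.
Proof.
  pose proof (ccw_bounds a b) as Hc. pose proof (ccw_decomp a b) as Hd.
  set (k := Int_part (b - a)) in Hd.
  destruct (Rle_lt_dec (ccw a b) 0) as [H0|H0];
    [| destruct (Rle_lt_dec (ccw a b) (1 / 3)) as [H1|H1];
       [| destruct (Rle_lt_dec (ccw a b) (2 / 3)) as [H2|H2]]].
  - right; right. rewrite (ccw_eq (a + 2 / 3) b (1 / 3) (k - 1)); [lra | lra |].
    rewrite minus_IZR. lra.
  - left; lra.
  - right; left. rewrite (ccw_eq (a + 1 / 3) b (ccw a b - 1 / 3) k); lra.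
  - right; right. rewrite (ccw_eq (a + 2 / 3) b (ccw a b - 2 / 3) k); lra.
Qed.

Definition vertex : Type := {x : R | 0 <= x < 1 /\ dyadic x}.

Definition pos (v : vertex) : R := proj1_sig v.

Lemma pos_bounds v : 0 <= pos v < 1.
Proof. exact (proj1 (proj2_sig v)). Qed.

Lemma pos_dyadic v : dyadic (pos v).
Proof. exact (proj2 (proj2_sig v)). Qed.

Lemma vertex_eq u v : pos u = pos v -> u = v.
Proof. destruct u, v. simpl. intros ->. f_equal. apply proof_irrelevance. Qed.

Definition vertex_of (d : R) (Hd : dyadic d) : vertex :=
  exist _ (frac_part d) (conj (frac_part_bounds d) (dyadic_frac_part d Hd)).

Lemma pos_vertex_of d Hd : 0 <= d < 1 -> pos (vertex_of d Hd) = d.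
Proof. intros Hd1. simpl. rewrite <- (Rplus_0_r d) at 1. exact (frac_part_id d 0 Hd1). Qed.

Definition circle_adj (u v : vertex) : Prop := 1 / 3 < ccw (pos u) (pos v) < 2 / 3.

Lemma circle_adj_sym u v : circle_adj u v -> circle_adj v u.
Proof. unfold circle_adj. intros Huv. rewrite ccw_sym by lra. lra. Qed.

Lemma circle_adj_irrefl u : ~ circle_adj u u.
Proof. unfold circle_adj. rewrite ccw_self. lra. Qed.

Definition circle_graph : graph := Graph vertex circle_adj circle_adj_sym circle_adj_irrefl.

Lemma circle_triangle_free : triangle_free circle_graph.
Proof.
  intros [x [y [z [Hxy [Hyz Hxz]]]]]. simpl in *. unfold circle_adj in *.
  destruct (Rle_lt_dec (ccw (pos x) (pos y)) (ccw (pos x) (pos z))) as [Hle|Hlt].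
  - rewrite (ccw_split _ _ _ Hle) in Hyz. lra.
  - pose proof (ccw_sym (pos y) (pos z) ltac:(lra)) as Hzy.
    rewrite (ccw_split _ _ _ (Rlt_le _ _ Hlt)) in Hzy. lra.
Qed.

Lemma circle_adj_vertex_of u d Hd :
  circle_adj u (vertex_of d Hd) <-> 1 / 3 < ccw (pos u) d < 2 / 3.
Proof. unfold circle_adj. simpl. rewrite ccw_frac_part_r. reflexivity. Qed.

Lemma circle_maximal : maximal_triangle_free circle_graph.
Proof.
  split; [exact circle_triangle_free|]. intros x y Hxy Hnadj. simpl in *.
  pose proof (ccw_bounds (pos x) (pos y)) as Hb. pose proof (ccw_decomp (pos x) (pos y)) as Hd.
  pose proof (dyadic_ccw_ne_third _ _ (pos_dyadic x) (pos_dyadic y)) as [H13 H23].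
  unfold circle_adj in Hnadj.
  set (f := ccw (pos x) (pos y)) in *. set (K := Int_part (pos y - pos x)) in Hd.
  assert (Hf0 : f <> 0).
  { intros H0. apply Hxy, vertex_eq, ccw_eq_0; auto using pos_bounds. }
  assert (Hdx := pos_dyadic x).
  assert (Hdf : dyadic f) by exact (dyadic_frac_part _ (dyadic_sub _ _ (pos_dyadic y) Hdx)).
  destruct (Rlt_le_dec f (1 / 3)) as [Hsmall|Hlarge].
  - assert (Hc : dyadic (pos x + (f / 2 + 1 / 2))).
    { apply dyadic_add; [exact Hdx|].
      apply dyadic_add; apply dyadic_half; [exact Hdf | exact (dyadic_IZR 1)]. }
    exists (vertex_of _ Hc). split; [|apply circle_adj_sym]; apply circle_adj_vertex_of.
    + rewrite (ccw_eq _ _ (f / 2 + 1 / 2) 0); simpl; lra.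
    + rewrite (ccw_eq _ _ (1 / 2 - f / 2) (- K)); [lra | lra | rewrite opp_IZR; lra].
  - assert (Hc : dyadic (pos x + f / 2)) by (apply dyadic_add; [| apply dyadic_half]; assumption).
    exists (vertex_of _ Hc). split; [|apply circle_adj_sym]; apply circle_adj_vertex_of.
    + rewrite (ccw_eq _ _ (f / 2) 0); simpl; lra.
    + rewrite (ccw_eq _ _ (1 - f / 2) (- K - 1)); [lra | lra | rewrite minus_IZR, opp_IZR; lra].
Qed.

Lemma circle_adj_separates u v :
  pos u < pos v <= 1 / 4 -> exists w, circle_adj u w /\ ~ circle_adj v w.
Proof.
  intros Huv. pose proof (pos_bounds u).
  destruct (dyadic_dense (pos u + 1 / 3) (pos v + 1 / 3) ltac:(lra)) as [d [Hd Hdu]].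
  exists (vertex_of d Hd). rewrite !circle_adj_vertex_of.
  rewrite (ccw_eq (pos u) d (d - pos u) 0), (ccw_eq (pos v) d (d - pos v) 0); simpl; lra.
Qed.

Lemma dyadic_inv_pow2 k : dyadic (/ 2 ^ k).
Proof. exists 1%Z, k. unfold Rdiv. ring. Qed.

Definition probe (k : nat) : vertex := vertex_of (/ 2 ^ (k + 2)) (dyadic_inv_pow2 (k + 2)).

Lemma pos_probe k : pos (probe k) = / 2 ^ (k + 2).
Proof.
  apply pos_vertex_of. pose proof (pow_lt 2 (k + 2) ltac:(lra)).
  pose proof (Rlt_pow 2 0 (k + 2) ltac:(lra) ltac:(lia)). simpl in *.
  split; [apply Rlt_le, Rinv_0_lt_compat; lra|].
  rewrite <- Rinv_1. apply Rinv_lt_contravar; lra.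
Qed.

Lemma pos_probe_le k : pos (probe k) <= 1 / 4.
Proof.
  rewrite pos_probe. replace (1 / 4) with (/ 2 ^ 2) by (simpl; field).
  apply Rinv_le_contravar; [apply pow_lt; lra | apply Rle_pow; [lra | lia]].
Qed.

Lemma pos_probe_lt i j : (i < j)%nat -> pos (probe j) < pos (probe i).
Proof.
  intros Hij. rewrite !pos_probe. apply Rinv_lt_contravar.
  - apply Rmult_lt_0_compat; apply pow_lt; lra.
  - apply Rlt_pow; [lra | lia].
Qed.

Lemma probe_injective : Injective probe.
Proof.
  intros i j Hij. destruct (Nat.lt_total i j) as [Hlt|[Heq|Hlt]]; [| exact Heq |];
    apply (f_equal pos) in Hij; pose proof (pos_probe_lt _ _ Hlt); lra.
Qed.

Lemma injective_on_probes (g : vertex -> nat) :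
  (forall u v, g u = g v -> forall w, circle_adj u w <-> circle_adj v w) ->
  Injective (fun k => g (probe k)).
Proof.
  intros Htwins i j Hgij.
  destruct (Nat.lt_total i j) as [Hlt|[Heq|Hlt]]; [exfalso | exact Heq | exfalso].
  - destruct (circle_adj_separates (probe j) (probe i)) as [w [Hjw Hiw]].
    { split; [exact (pos_probe_lt i j Hlt) | apply pos_probe_le]. }
    exact (Hiw (proj2 (Htwins _ _ Hgij w) Hjw)).
  - destruct (circle_adj_separates (probe i) (probe j)) as [w [Hiw Hjw]].
    { split; [exact (pos_probe_lt j i Hlt) | apply pos_probe_le]. }
    exact (Hjw (proj1 (Htwins _ _ Hgij w) Hiw)).
Qed.

Lemma circle_infinite : infinite_graph circle_graph.
Proof.
  intros l. destruct (injective_family_not_listed probe probe_injective l) as [k Hk].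
  exists (probe k). exact Hk.
Qed.

Lemma circle_not_blowup : ~ is_blowup_of_finite_graph circle_graph.
Proof.
  intros [H [f [Hf [_ Hadj]]]]. simpl in *.
  assert (Htwins : forall u v, f u = f v -> forall w, circle_adj u w <-> circle_adj v w).
  { intros u v Huv w. rewrite !Hadj, Huv. reflexivity. }
  destruct (injective_family_not_listed _ (injective_on_probes f Htwins) (seq 0 (fg_n H)))
    as [k Hk].
  apply Hk, in_seq. split; [lia | apply Hf].
Qed.

Definition in_arc_co (s q : R) : Prop := ccw s q < 1 / 3.

Definition in_arc_oc (t q : R) : Prop := 0 < ccw t q <= 1 / 3.

Lemma arc_common_neighbour (n : nat) (P : nat -> Prop) (s : R) (p : nat -> R) :
  (forall i, (i < n)%nat -> P i -> in_arc_co s (p i)) ->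
  exists y : vertex, forall i, (i < n)%nat -> P i -> 1 / 3 < ccw (p i) (pos y) < 2 / 3.
Proof.
  intros Harc. unfold in_arc_co in Harc.
  destruct (classic (exists i, (i < n)%nat /\ P i)) as [Hex|Hno].
  2:{ exists (probe 0). intros i Hi Pi. exfalso. exact (Hno (ex_intro _ i (conj Hi Pi))). }
  destruct (exists_argmin n P (fun i => - ccw s (p i)) Hex) as [i0 [Hi0 [Pi0 Hmax]]].
  pose proof (Harc i0 Hi0 Pi0) as HM. set (M := ccw s (p i0)) in *.
  destruct (dyadic_dense (s + M + 1 / 3) (s + 2 / 3) ltac:(lra)) as [d [Hd Hdint]].
  exists (vertex_of d Hd). intros i Hi Pi. simpl. rewrite ccw_frac_part_r.
  pose proof (Hmax i Hi Pi). pose proof (ccw_bounds s (p i)).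
  assert (Hsd : ccw s d = d - s) by (apply (ccw_eq s d (d - s) 0); simpl; lra).
  rewrite (ccw_split s (p i) d) by lra. lra.
Qed.

Lemma window_count_le (n m : nat) (p : nat -> R) :
  (forall j, (j < n)%nat -> (count (fun i => in_arc_co (p j) (p i)) n <= m)%nat) ->
  forall t, (count (fun i => in_arc_oc t (p i)) n <= m)%nat.
Proof.
  intros Hlight t.
  destruct (classic (exists i, (i < n)%nat /\ in_arc_oc t (p i))) as [Hex|Hno].
  2:{ rewrite count_none; [lia|]. intros i Hi Hw. exact (Hno (ex_intro _ i (conj Hi Hw))). }
  destruct (exists_argmin n _ (fun i => ccw t (p i)) Hex) as [i0 [Hi0 [Hw0 Hmin]]].
  eapply Nat.le_trans; [|exact (Hlight i0 Hi0)].
  apply count_le_mono. intros i Hi Hw. specialize (Hmin i Hi Hw).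
  unfold in_arc_oc, in_arc_co in *. rewrite (ccw_split t (p i0) (p i) Hmin). lra.
Qed.

Lemma heavy_forward_arc (m : nat) (p : nat -> R) :
  (1 <= m)%nat -> (forall i j, ccw (p j) (p i) <> 1 / 3) ->
  exists j, (j < 3 * m)%nat /\ (m + 1 <= count (fun i => in_arc_co (p j) (p i)) (3 * m))%nat.
Proof.
  intros Hm Hnot_third. apply NNPP. intros Hno.
  assert (Hlight : forall j, (j < 3 * m)%nat ->
                     (count (fun i => in_arc_co (p j) (p i)) (3 * m) <= m)%nat).
  { intros j Hj. apply Nat.nlt_ge. intros Hheavy. apply Hno. exists j. split; [exact Hj | lia]. }
  assert (Hfirst : (count (fun i => in_arc_oc (p 0%nat) (p i)) (3 * m) <
                    count (fun i => in_arc_co (p 0%nat) (p i)) (3 * m))%nat).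
  { apply count_lt_mono with 0%nat; unfold in_arc_oc, in_arc_co; [lia | | |].
    - rewrite ccw_self. lra.
    - rewrite ccw_self. lra.
    - intros i _ Hw. pose proof (Hnot_third i 0%nat). lra. }
  pose proof (Hlight 0%nat ltac:(lia)).
  pose proof (window_count_le _ _ p Hlight (p 0%nat + 1 / 3)).
  pose proof (window_count_le _ _ p Hlight (p 0%nat + 2 / 3)).
  pose proof (count_cover3 (fun i => in_arc_oc (p 0%nat) (p i))
                (fun i => in_arc_oc (p 0%nat + 1 / 3) (p i))
                (fun i => in_arc_oc (p 0%nat + 2 / 3) (p i))
                (3 * m) (fun i _ => ccw_cover (p 0%nat) (p i))).
  lia.
Qed.

Lemma circle_property_D (m : nat) (x : nat -> vertex) :
  (1 <= m)%nat -> exists y, at_least_indices (3 * m) (m + 1) (fun i => circle_adj (x i) y).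
Proof.
  intros Hm. set (p i := pos (x i)).
  destruct (heavy_forward_arc m p Hm) as [j [Hj Hheavy]].
  { intros i j. apply (dyadic_ccw_ne_third _ _ (pos_dyadic (x j)) (pos_dyadic (x i))). }
  destruct (arc_common_neighbour (3 * m) _ (p j) p (fun i _ Hi => Hi)) as [y Hy].
  exists y. apply at_least_indices_count.
  eapply Nat.le_trans; [exact Hheavy|]. apply count_le_mono. exact Hy.
Qed.

Local Close Scope R_scope.

Theorem theorem5p2 :
  exists G : graph,
    infinite_graph G /\
    maximal_triangle_free G /\
    (forall k : nat, 1 <= k -> property_D k G) /\
    ~ is_blowup_of_finite_graph G.
Proof.
  exists circle_graph.
  split; [exact circle_infinite|].
  split; [exact circle_maximal|].
  split; [|exact circle_not_blowup].
  intros k _ m Hm _ x. exact (circle_property_D m x Hm).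
Qed.
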